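(* Let ${\bf u}\in\mathcal A^{\mathbb N}$ have its language closed under reversal. If $D({\bf u})>0$, then either there exists a non-palindromic factor $q$ of ${\bf u}$ such that $\Gamma(q)$ contains a cycle, or there exists a palindromic factor $q$ of ${\bf u}$ such that $\Theta(q)$ contains a cycle. Moreover, if the empty word is the unique factor $q$ with this property, then there exists a letter having a non-palindromic complete return word in ${\bf u}$.
   Context: $\widetilde w$ is the reversal of $w$; $w$ is a palindrome if $w=\widetilde w$; the language is closed under reversal if the reversal of every factor is a factor. Palindromic defect: for a finite word $w$ of length $n$, $D(w)=n+1-$(number of distinct palindromic factors of $w$, including the empty word), and $D({\bf u})=\sup D(w)$ over factors of ${\bf u}$. With $E^+(w)=\{b: wb\text{ factor}\}$, $E^-(w)=\{a: aw\text{ factor}\}$, $E(w)=\{(a,b): awb\text{ factor}\}$: $\Gamma(w)$ is the bipartite graph on $(E^-(w)\times\{-1\})\cup(E^+(w)\times\{+1\})$ with edges $\{(a,-1),(b,+1)\}$ for $(a,b)\in E(w)$; for palindromic $w$, $\Theta(w)$ is the graph on $E^+(w)$ with edges $\{a,b\}$ for $(a,b)\in E(w)$, $a\ne b$. If $i<j$ are consecutive occurrences of a factor $w$ in ${\bf u}=u_0u_1\cdots$, the word $u_i\cdots u_{j+|w|-1}$ is a complete return word to $w$. *)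

From mathcomp Require Import all_boot.
Set Implicit Arguments. Unset Strict Implicit. Unset Printing Implicit Defensive.

Section Words.
Variable A : finType.

Definition subword (u : nat -> A) (i n : nat) : seq A := mkseq (fun k => u (i + k)) n.

Definition occurs_at (u : nat -> A) (w : seq A) (i : nat) : Prop := subword u i (size w) = w.

Definition factor (u : nat -> A) (w : seq A) : Prop := exists i, occurs_at u w i.

Definition palindrome (w : seq A) : bool := rev w == w.

Definition closed_under_reversal (u : nat -> A) : Prop :=
  forall w, factor u w -> factor u (rev w).

Definition factors_fin (w : seq A) : seq (seq A) :=
  [seq take l (drop i w) | i <- iota 0 (size w).+1, l <- iota 0 (size w - i).+1].

(* number of distinct palindromic factors of w, empty word included *)
Definition num_pal (w : seq A) : nat := size (undup (filter palindrome (factors_fin w))).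

Definition defect (w : seq A) : nat := (size w).+1 - num_pal w.

(* D(u) = sup_{w factor} D(w) > 0 *)
Definition defect_pos (u : nat -> A) : Prop := exists w, factor u w /\ 0 < defect w.

Definition ext_right (u : nat -> A) (w : seq A) (b : A) : Prop := factor u (rcons w b).
Definition ext_left (u : nat -> A) (w : seq A) (a : A) : Prop := factor u (a :: w).
Definition ext_both (u : nat -> A) (w : seq A) (a b : A) : Prop := factor u (a :: rcons w b).

(* Gamma(w): vertices (a,false) ~ (a,-1) for a in E^-(w), (b,true) ~ (b,+1) for b in E^+(w);
   edge {(a,-1),(b,+1)} iff (a,b) in E(w). Symmetric edge relation. *)
Definition Gamma_edge (u : nat -> A) (w : seq A) (x y : A * bool) : Prop :=
  (x.2 = false /\ y.2 = true /\ ext_left u w x.1 /\ ext_right u w y.1 /\ ext_both u w x.1 y.1)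
  \/ (y.2 = false /\ x.2 = true /\ ext_left u w y.1 /\ ext_right u w x.1 /\ ext_both u w y.1 x.1).

Definition Theta_edge (u : nat -> A) (w : seq A) (a b : A) : Prop :=
  a != b /\ ext_right u w a /\ ext_right u w b /\ (ext_both u w a b \/ ext_both u w b a).

End Words.

(* A (simple, undirected) graph given by a symmetric edge relation E contains a cycle:
   distinct vertices x = v_0, v_1, ..., v_k (k >= 2) with v_i v_{i+1} and v_k v_0 edges. *)
Definition has_cycle (T : eqType) (E : T -> T -> Prop) : Prop :=
  exists (x : T) (s : seq T), 2 <= size s /\ uniq (x :: s) /\
    forall i, i < (size s).+1 ->
      E (nth x (x :: s) i) (nth x (x :: s) (i.+1 %% (size s).+1)).

Section Words2.
Variable A : finType.

Definition cycle_prop (u : nat -> A) (q : seq A) : Prop :=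
  (~~ palindrome q /\ has_cycle (Gamma_edge u q)) \/
  (palindrome q /\ has_cycle (Theta_edge u q)).

Definition complete_return_word (u : nat -> A) (w r : seq A) : Prop :=
  exists i j, [/\ i < j, occurs_at u w i, occurs_at u w j,
    (forall k, i < k < j -> ~ occurs_at u w k) &
    r = subword u i (j + size w - i)].
End Words2.

From mathcomp Require Import all_boot zify.
From Stdlib Require Import ClassicalEpsilon.

Set Implicit Arguments. Unset Strict Implicit. Unset Printing Implicit Defensive.

(* Assume no factor has the cycle property (for the second claim: none but the empty
   word, and all complete return words to letters are palindromes).  Then, by induction
   on n, in every complete return word to a pair {w, rev w} with |w| = n the suffix of
   length n + 1 is the reversal of the prefix of length n + 1.  Consequently every
   complete return word to a palindrome is a palindrome, so the longest palindromic
   suffix of each prefix of a factor is unioccurrent in that prefix: every factor w has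
   |w| + 1 distinct palindromic factors, i.e. D(u) = 0. *)

Section Subword.
Variables (A : finType) (u : nat -> A).
Notation W := (subword u).

Lemma size_subword i n : size (W i n) = n.
Proof. exact: size_mkseq. Qed.

Lemma nth_subword x0 i n k : k < n -> nth x0 (W i n) k = u (i + k).
Proof. exact: nth_mkseq. Qed.

Lemma subword0 i : W i 0 = [::].
Proof. by []. Qed.

Lemma subwordSr i n : W i n.+1 = rcons (W i n) (u (i + n)).
Proof. exact: mkseqS. Qed.

Lemma subwordS i n : W i n.+1 = u i :: W i.+1 n.
Proof.
apply: (@eq_from_nth _ (u 0)); first by rewrite size_subword /= size_subword.
rewrite size_subword => -[|k] kn; first by rewrite nth_subword // addn0.
by rewrite -[nth _ (_ :: _) _]/(nth (u 0) (W i.+1 n) k) !nth_subword // addSnnS.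
Qed.

Lemma subword1 i : W i 1 = [:: u i].
Proof. by rewrite subwordS. Qed.

Lemma take_subword i n m : m <= n -> take m (W i n) = W i m.
Proof.
move=> mn; apply: (@eq_from_nth _ (u 0)); first by rewrite size_takel size_subword.
rewrite size_takel ?size_subword // => k km.
by rewrite nth_take // !nth_subword // (leq_trans km).
Qed.

Lemma drop_subword i n m : drop m (W i n) = W (i + m) (n - m).
Proof.
apply: (@eq_from_nth _ (u 0)); first by rewrite size_drop !size_subword.
rewrite size_drop size_subword => k kn.
by rewrite nth_drop !nth_subword ?addnA // -ltn_subRL.
Qed.

Lemma nth_rev_subword x0 i n k : k < n -> nth x0 (rev (W i n)) k = u (i + (n - k.+1)).
Proof.
by move=> kn; rewrite nth_rev size_subword // nth_subword // subnSK // leq_subr.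
Qed.

Lemma factor_subword i n : factor u (W i n).
Proof. by exists i; rewrite /occurs_at size_subword. Qed.

End Subword.

Lemma last_index_before (P : pred nat) a g : a < g -> P a ->
  exists m, [/\ a <= m, m < g, P m & forall k, m < k < g -> ~~ P k].
Proof.
elim: g => // g IH; rewrite ltnS leq_eqVlt => /orP[/eqP <-|ag] Pa.
  by exists a; split => // k /andP[ak kg]; lia.
case Pg: (P g).
  by exists g; split => //; [exact: ltnW | move=> k /andP[gk kg]; lia].
have [m [am mg Pm mlast]] := IH ag Pa.
exists m; split; rewrite ?(ltnW mg) ?ltnS ?(ltnW mg) //.
move=> k /andP[mk]; rewrite ltnS leq_eqVlt => /orP[/eqP ->|kg]; first by rewrite Pg.
by apply: mlast; rewrite mk kg.
Qed.

Section AcyclicGraph.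
Variables (T : eqType) (E : T -> T -> Prop).

Definition edgeb x y : bool := if excluded_middle_informative (E x y) then true else false.

Lemma edgebP x y : reflect (E x y) (edgeb x y).
Proof. by rewrite /edgeb; case: excluded_middle_informative => exy; constructor. Qed.

Definition edge_or_stay x y := (x == y) || edgeb x y.

Definition reach_avoiding x0 y z :=
  exists p, [/\ path edge_or_stay y p, last y p = z & x0 \notin y :: p].

Lemma reach_avoiding_refl x0 y : y != x0 -> reach_avoiding x0 y y.
Proof. by move=> yx0; exists [::]; rewrite /= inE eq_sym (negbTE yx0). Qed.

Lemma reach_avoiding_rcons x0 y z z' :
  reach_avoiding x0 y z -> z = z' \/ E z z' -> z' != x0 -> reach_avoiding x0 y z'.
Proof.
move=> [p [yp <- x0p]] zz' z'x0; exists (rcons p z'); split.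
- by rewrite rcons_path yp /edge_or_stay; case: zz' => [->|/edgebP ->]; rewrite ?eqxx ?orbT.
- by rewrite last_rcons.
- by rewrite -cats1 -cat_cons mem_cat negb_or x0p inE eq_sym z'x0.
Qed.

Lemma path_edgeb_uniq y p : path edge_or_stay y p -> uniq (y :: p) -> path edgeb y p.
Proof.
elim: p y => //= a p IHp y /andP[ya ap] /andP[yp up].
rewrite IHp // andbT; move: ya yp; rewrite /edge_or_stay inE negb_or.
by case/orP=> [/eqP->|//]; rewrite eqxx.
Qed.

Hypothesis acyclic : ~ has_cycle E.

(* Otherwise the avoiding path from y to z, closed up through x0, is a cycle. *)
Lemma acyclic_reach_avoiding x0 y z :
  E x0 y -> E z x0 -> reach_avoiding x0 y z -> y = z.
Proof.
move=> x0y zx0 [p [yp last_p x0p]].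
apply/eqP/negPn/negP => yz; apply: acyclic.
move: last_p; case: (shortenP yp) => p' yp' up' sub_p' last_p'.
have yp'E := path_edgeb_uniq yp' up'.
have x0p' : x0 \notin y :: p'.
  move: x0p; rewrite !inE !negb_or => /andP[-> x0p] /=.
  by apply: contra x0p => /sub_p'.
have p'0 : p' != [::] by case: p' last_p' {yp' up' yp'E x0p' sub_p'} yz => //= ->; rewrite eqxx.
exists x0, (y :: p'); split; first by case: p' p'0 {yp' up' yp'E x0p' sub_p' last_p'}.
split; first by rewrite cons_uniq x0p' up'.
move=> [_|i] /=; first exact: x0y.
rewrite !ltnS leq_eqVlt => /orP[/eqP ->|ilt].
  by rewrite modnn -last_nth last_p'.
rewrite modn_small /= ?ltnS //.
by apply/edgebP; move/(pathP x0): yp'E; apply.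
Qed.

(* In a forest, a closed walk from x0 that does not pass through x0 in between must
   come back along the edge it left by.  The walk is presented by its visits k in
   [1, K] to some object: it arrives at [arr k], moves to [dep k] (or stays), and the
   next visit is entered at [dep k]. *)
Lemma acyclic_walk_returns (arr dep : nat -> T) (visit : pred nat) K x0 :
  1 < K -> visit 1 -> visit K ->
  (forall k, 1 <= k <= K -> visit k -> arr k = dep k \/ E (arr k) (dep k)) ->
  (forall k k', 1 <= k -> k < k' -> k' <= K -> visit k -> visit k' ->
     (forall j, k < j < k' -> ~~ visit j) -> dep k = arr k') ->
  arr 1 = x0 -> dep K = x0 ->
  (forall k, 1 <= k < K -> visit k -> dep k != x0) ->
  arr K = dep 1.
Proof.
move=> K1 v1 vK moves links arr1 depK away.
have reach_dep k : 1 <= k < K -> visit k -> reach_avoiding x0 (dep 1) (dep k).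
  elim/ltn_ind: k => k IHk /andP[k1 kK] vk.
  move: k1; rewrite leq_eqVlt => /orP[/eqP <-|k1].
    by apply: reach_avoiding_refl; apply: away; rewrite // K1.
  have [m [m1 mk vm mlast]] := last_index_before k1 v1.
  have := IHk m mk; rewrite m1 (ltn_trans mk kK) => /(_ isT vm).
  rewrite (links m k) //; last exact: ltnW.
  by move/reach_avoiding_rcons; apply; [apply: moves; lia | apply: away; lia].
have [m [m1 mK vm mlast]] := last_index_before K1 v1.
have depm : dep m = arr K by apply: links.
have := reach_dep m; rewrite m1 mK depm => /(_ isT vm) reach_arrK.
symmetry; apply: acyclic_reach_avoiding reach_arrK.
- have := moves 1; rewrite leqnn ltnW // arr1 => /(_ isT v1) [dep1|//].
  by move: (away 1); rewrite leqnn K1 -dep1 eqxx => /(_ isT v1).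
- have := moves K; rewrite leqnn ltnW // depK => /(_ isT vK) [arrK|//].
  by move: (away m); rewrite m1 mK depm arrK eqxx => /(_ isT vm).
Qed.

End AcyclicGraph.

Section WordEquations.
Variable T : eqType.
Implicit Types (c d : T) (w : seq T).

Lemma cons_eq_rcons_ends c d w : c :: w = rcons w d -> c = d.
Proof. by elim: w c => [|e w IHw] c [] // -> /IHw. Qed.

Lemma cons_eq_rcons_rev c d w : c :: w = rcons w d -> rev w = w.
Proof.
move=> cw; suff /all_pred1P -> : all (pred1 c) w by rewrite rev_nseq.
by elim: w c cw => [|e w IHw] c //= [<- /IHw ->]; rewrite eqxx.
Qed.

Lemma cons_rev_eq_rcons_ends c d w : c :: rev w = rcons w d -> c = d.
Proof.
case: w => [[]//|e w]; rewrite rev_cons => ew.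
by have := congr1 (last c) ew; rewrite /= !last_rcons; case: ew => ->.
Qed.

Lemma mem_rev_pair_sym (q a b : seq T) : a \in [:: q; rev q] ->
  (b \in [:: a; rev a]) = (b \in [:: q; rev q]).
Proof. by rewrite !inE => /orP[] /eqP -> //; rewrite revK orbC. Qed.

End WordEquations.

Section MirroredReturns.
Variables (A : finType) (u : nat -> A).
Hypothesis closed_u : closed_under_reversal u.
Notation W := (subword u).

Lemma factor_rev_subword j m : factor u (rev (W j m)).
Proof. exact/closed_u/factor_subword. Qed.

Lemma rev_subword_idP j m :
  rev (W j m) = W j m <-> forall t, t < m -> u (j + t) = u (j + (m - t.+1)).
Proof.
split=> [pal t tm|sym].
  by have := congr1 (nth (u 0) ^~ t) pal; rewrite nth_rev_subword // nth_subword.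
apply: (@eq_from_nth _ (u 0)); first by rewrite size_rev.
by rewrite size_rev size_subword => t tm; rewrite nth_rev_subword // nth_subword // [RHS]sym.
Qed.

Lemma rev_subword_adjacent j n :
  W j n \in [:: W j.+1 n; rev (W j.+1 n)] -> rev (W j n.+1) = W j n.+1.
Proof.
rewrite !inE => /orP[] /eqP shift; apply/rev_subword_idP => t tn.
  have const t' : t' <= n -> u (j + t') = u j.
    elim: t' => [|t' IHt] t'n; first by rewrite addn0.
    have := congr1 (nth (u 0) ^~ t') shift; rewrite !nth_subword // addSn -addnS => <-.
    exact/IHt/ltnW.
  by rewrite !const //; lia.
have sym t' : t' < n -> u (j + t') = u (j + (n - t')).
  move=> t'n; have := congr1 (nth (u 0) ^~ t') shift.
  by rewrite nth_subword // nth_rev_subword // => ->; congr (u _); lia.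
case: (ltnP t n) => [tn'|nt]; first by rewrite sym //; congr (u _); lia.
have -> : t = n by lia.
case: n {shift tn nt} sym => [|n] sym; first by rewrite addn0.
by rewrite subnn addn0; have := sym 0 isT; rewrite addn0 subn0 => ->.
Qed.

(* Whenever W i L is a complete return word to {w, rev w}, w = W i n, its suffix of
   length n + 1 is the reversal of its prefix of length n + 1. *)
Definition mirrored_returns n := forall i L, n.+2 <= L ->
  W (i + (L - n)) n \in [:: W i n; rev (W i n)] ->
  (forall k, 0 < k < L - n -> W (i + k) n \notin [:: W i n; rev (W i n)]) ->
  W (i + (L - n - 1)) n.+1 = rev (W i n.+1).

Definition acyclic_factors n := forall q, size q = n -> factor u q -> ~ cycle_prop u q.

Lemma mirrored_returns_next n i q k k' : mirrored_returns n -> k < k' ->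
  W (i + k) n \in [:: q; rev q] -> W (i + k') n \in [:: q; rev q] ->
  (forall j, k < j < k' -> W (i + j) n \notin [:: q; rev q]) ->
  W (i + k'.-1) n.+1 \in [:: W (i + k) n.+1; rev (W (i + k) n.+1)].
Proof.
move=> mirrored_n kk' occ_k occ_k' no_occ.
have [->|k'k] := eqVneq k' k.+1; first exact: mem_head.
have := mirrored_n (i + k) (k' - k + n).
have -> : i + k + (k' - k + n - n) = i + k' by lia.
have -> : i + k + (k' - k + n - n - 1) = i + k'.-1 by lia.
move=> -> //; first by rewrite !inE eqxx orbT.
- by lia.
- by rewrite (mem_rev_pair_sym _ occ_k).
- by move=> j jk; rewrite (mem_rev_pair_sym _ occ_k) -addnA; apply: no_occ; lia.
Qed.

(* The occurrences of q = W (i + 1) n and of its reversal inside a complete return word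
   to {s, rev s}, s = W i n.+1, are visited in order; the letters around a visit form an
   edge of Theta(q) (q palindromic) or of Gamma(q) (q not palindromic, the side of
   each letter being swapped when the visit reads rev q), and by [mirrored_returns n]
   consecutive visits share a vertex.  The result is a closed walk from u i, so in an
   acyclic graph the walk returns along the edge it left by: the letter before the
   last visit is the letter after the first one. *)
Section MirroredStep.
Variables (n i K : nat).
Hypotheses (mirrored_n : mirrored_returns n) (acyclic_n : acyclic_factors n).
Hypothesis K_gt1 : 1 < K.
Hypothesis end_occ : W (i + K) n.+1 \in [:: W i n.+1; rev (W i n.+1)].
Hypothesis no_mid_occ :
  forall k, 0 < k < K -> W (i + k) n.+1 \notin [:: W i n.+1; rev (W i n.+1)].

Let s := W i n.+1.
Let q := W i.+1 n.
Let window k := W (i + k) n.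
Let before k := u (i + k.-1).
Let after k := u (i + k + n).
Let visit k := window k \in [:: q; rev q].

Lemma s_cons : s = u i :: q.
Proof. exact: subwordS. Qed.

Lemma window_rcons k : W (i + k) n.+1 = rcons (window k) (after k).
Proof. exact: subwordSr. Qed.

Lemma window_cons k : 0 < k -> W (i + k.-1) n.+1 = before k :: window k.
Proof. by move=> k0; rewrite subwordS /window /before; congr (_ :: W _ _); lia. Qed.

Lemma window_cons_rcons k : 0 < k -> W (i + k.-1) n.+2 = before k :: rcons (window k) (after k).
Proof.
move=> k0; rewrite subwordS subwordSr /window /before /after.
by congr (_ :: rcons (W _ _) (u _)); lia.
Qed.

Lemma window1 : window 1 = q.
Proof. by rewrite /window addn1. Qed.

Lemma visit1 : visit 1.
Proof. by rewrite /visit window1 mem_head. Qed.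

Lemma visitE k : visit k -> window k = q \/ window k = rev q.
Proof. by rewrite /visit !inE => /orP[] /eqP; [left | right]. Qed.

Lemma visit_next k k' : k < k' -> visit k -> visit k' ->
  (forall j, k < j < k' -> ~~ visit j) ->
  W (i + k'.-1) n.+1 \in [:: W (i + k) n.+1; rev (W (i + k) n.+1)].
Proof. exact: mirrored_returns_next. Qed.

(* A return to s itself would force s to be a palindrome. *)
Lemma end_rev : W (i + K) n.+1 = rev s.
Proof.
move: end_occ; rewrite -/s !inE => /orP[/eqP end_s|/eqP //].
have [pal_s|npal_s] := eqVneq (rev s) s; first by rewrite end_s pal_s.
have windowK1 : window K.+1 = q.
  have -> : window K.+1 = drop 1 (W (i + K) n.+1).
    by rewrite drop_subword /window addn1 addnS subn1.
  by rewrite end_s s_cons /= drop0.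
have visitK1 : visit K.+1 by rewrite /visit windowK1 mem_head.
have [m [m1 mK vm mlast]] := last_index_before (ltn_trans K_gt1 (ltnSn K)) visit1.
have occ_m : W (i + m) n.+1 \in [:: s; rev s].
  have := visit_next mK vm visitK1 mlast; rewrite /= end_s => occ_m.
  by rewrite (mem_rev_pair_sym _ occ_m) mem_head.
have [mK'|] := ltnP m K.
  have mid : 0 < m < K by lia.
  by have := no_mid_occ mid; rewrite -/s occ_m.
rewrite leq_eqVlt ltnNge -ltnS mK orbF => /eqP Km; subst m.
case/negP: npal_s; rewrite -end_s; apply/eqP/rev_subword_adjacent.
by rewrite -addnS -/(window K.+1) windowK1.
Qed.

Lemma window_end : window K = rev q /\ after K = u i.
Proof. by have := window_rcons K; rewrite end_rev s_cons rev_cons => /rcons_inj [-> ->]. Qed.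

Lemma visitK : visit K.
Proof. by rewrite /visit window_end.1 !inE eqxx orbT. Qed.

Lemma no_mid_rev k : 0 < k < K -> W (i + k) n.+1 <> rev s.
Proof. by move=> kK mid; have := no_mid_occ kK; rewrite mid !inE eqxx orbT. Qed.

Section PalindromicWindow.
Hypothesis pal_q : rev q = q.

Lemma visit_pal k : visit k -> window k = q.
Proof. by move/visitE => [|->]. Qed.

Lemma theta_move k : 0 < k -> visit k ->
  before k = after k \/ Theta_edge u q (before k) (after k).
Proof.
move=> k0 /visit_pal wk.
have [|ne] := eqVneq (before k) (after k); [by left | right].
split=> //; split; last split.
- by have := factor_rev_subword (i + k.-1) n.+1; rewrite window_cons // wk rev_cons pal_q.
- by have := factor_subword u (i + k) n.+1; rewrite window_rcons wk.
- by left; have := factor_subword u (i + k.-1) n.+2; rewrite window_cons_rcons // wk.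
Qed.

Lemma theta_link k k' : 0 < k -> k < k' -> visit k -> visit k' ->
  (forall j, k < j < k' -> ~~ visit j) -> after k = before k'.
Proof.
move=> k0 kk' vk vk' between; have := visit_next kk' vk vk' between.
rewrite window_cons ?(ltn_trans k0 kk') // window_rcons !visit_pal // !inE.
case/orP=> /eqP; first by move/cons_eq_rcons_ends.
by rewrite rev_rcons pal_q => -[].
Qed.

Lemma before_end_pal : before K = after 1.
Proof.
have acyclic_theta : ~ has_cycle (Theta_edge u q).
  move=> cyc; apply: (acyclic_n (q := q)); rewrite ?size_subword //; first exact: factor_subword.
  by right; split; first exact/eqP.
apply: (acyclic_walk_returns (arr := before) (dep := after) acyclic_theta K_gt1 visit1 visitK).
- by move=> k /andP[k0 _]; apply: theta_move.
- by move=> k k' k0 kk' _; apply: theta_link.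
- by rewrite /before addn0.
- by rewrite window_end.2.
- move=> k /andP[k0 kK] vk; apply/eqP => after_k; apply: (no_mid_rev (k := k)); first lia.
  by rewrite window_rcons visit_pal // after_k s_cons rev_cons pal_q.
Qed.

End PalindromicWindow.

Section NonPalindromicWindow.
Hypothesis npal_q : rev q != q.

Let arrival k := (before k, window k != q).
Let departure k := (after k, window k == q).

Lemma gamma_move k : 0 < k -> visit k -> Gamma_edge u q (arrival k) (departure k).
Proof.
move=> k0 /visitE[] wk; rewrite /arrival /departure wk ?eqxx ?(negbTE npal_q) /=.
  left; do 2!split=> //; split; last split.
  - by have := factor_subword u (i + k.-1) n.+1; rewrite window_cons // wk.
  - by have := factor_subword u (i + k) n.+1; rewrite window_rcons wk.
  - by have := factor_subword u (i + k.-1) n.+2; rewrite window_cons_rcons // wk.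
right; do 2!split=> //; split; last split.
- by have := factor_rev_subword (i + k) n.+1; rewrite window_rcons wk rev_rcons revK.
- by have := factor_rev_subword (i + k.-1) n.+1; rewrite window_cons // wk rev_cons revK.
- have := factor_rev_subword (i + k.-1) n.+2.
  by rewrite window_cons_rcons // wk rev_cons rev_rcons revK rcons_cons.
Qed.

Lemma next_visit_rev k k' : 0 < k -> k < k' -> visit k -> visit k' ->
  (forall j, k < j < k' -> ~~ visit j) ->
  before k' = after k /\ window k' = rev (window k).
Proof.
move=> k0 kk' vk vk' between; have := visit_next kk' vk vk' between.
rewrite window_cons ?(ltn_trans k0 kk') // window_rcons !inE.
case/orP=> /eqP; last by rewrite rev_rcons => -[-> ->].
case: (visitE vk) (visitE vk') => -> [] ->.
- by move/cons_eq_rcons_rev; move/eqP: npal_q.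
- by move/cons_rev_eq_rcons_ends.
- move=> e; have /cons_rev_eq_rcons_ends -> : before k' :: rev (rev q) = rcons (rev q) (after k).
    by rewrite revK.
  by rewrite revK.
- by move/cons_eq_rcons_rev/(congr1 rev); rewrite !revK; move/eqP: npal_q.
Qed.

Lemma gamma_link k k' : 0 < k -> k < k' -> visit k -> visit k' ->
  (forall j, k < j < k' -> ~~ visit j) -> departure k = arrival k'.
Proof.
move=> k0 kk' vk vk' between; rewrite /departure /arrival.
have [-> ->] := next_visit_rev k0 kk' vk vk' between; congr (_, _).
by case: (visitE vk) => ->; rewrite ?revK eqxx ?npal_q ?(negbTE npal_q).
Qed.

Lemma before_end_nonpal : before K = after 1.
Proof.
have acyclic_gamma : ~ has_cycle (Gamma_edge u q).
  move=> cyc; apply: (acyclic_n (q := q)); rewrite ?size_subword //; first exact: factor_subword.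
  by left.
suff /(congr1 fst) : arrival K = departure 1 by [].
apply: (acyclic_walk_returns (arr := arrival) (dep := departure) (x0 := (u i, false))
  acyclic_gamma K_gt1 visit1 visitK).
- by move=> k /andP[k0 _] vk; right; apply: gamma_move.
- by move=> k k' k0 kk' _; apply: gamma_link.
- by rewrite /arrival /before addn0 window1 eqxx.
- by rewrite /departure window_end.2 window_end.1 (negbTE npal_q).
- move=> k /andP[k0 kK] vk; apply/eqP => -[after_k window_k].
  apply: (no_mid_rev (k := k)); first lia.
  have wk : window k = rev q by case: (visitE vk) window_k => ->; rewrite ?eqxx.
  by rewrite window_rcons wk after_k s_cons rev_cons.
Qed.

End NonPalindromicWindow.

Lemma mirrored_step_end : W (i + K.-1) n.+2 = rev (W i n.+2).
Proof.
have -> : W i n.+2 = W (i + 1.-1) n.+2 by rewrite addn0.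
rewrite !window_cons_rcons ?(ltnW K_gt1) // window1 window_end.1 window_end.2.
rewrite (_ : before 1 = u i); last by rewrite /before addn0.
have -> : before K = after 1.
  by have [/before_end_pal | /before_end_nonpal] := eqVneq (rev q) q.
by rewrite rev_cons rev_rcons rcons_cons.
Qed.

End MirroredStep.

Lemma mirrored_returnsS n :
  mirrored_returns n -> acyclic_factors n -> mirrored_returns n.+1.
Proof.
move=> mirrored_n acyclic_n i L L_ge end_occ no_mid_occ.
by rewrite subn1; apply: mirrored_step_end => //; lia.
Qed.

Lemma mirrored_returns_from m : mirrored_returns m ->
  (forall n, m <= n -> acyclic_factors n) -> forall n, m <= n -> mirrored_returns n.
Proof.
move=> mirrored_m acyclic; elim=> [|n IHn]; first by rewrite leqn0 => /eqP <-.
rewrite leq_eqVlt ltnS => /orP[/eqP <- //|mn].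
by apply: mirrored_returnsS; [apply: IHn | apply: acyclic].
Qed.

End MirroredReturns.

Section MirroredBase.
Variables (A : finType) (u : nat -> A).
Notation W := (subword u).

(* The empty word occurs everywhere, so no return to it has length L >= 2. *)
Lemma mirrored_returns0 : mirrored_returns u 0.
Proof.
move=> i L L_ge _ no_occ; have mid : 0 < 1 < L - 0 by lia.
by have := no_occ 1 mid; rewrite !subword0 mem_head.
Qed.

Lemma mirrored_returns1 :
  (forall a r, complete_return_word u [:: a] r -> palindrome r) -> mirrored_returns u 1.
Proof.
move=> pal_returns i L L_ge end_occ no_occ.
have ret : complete_return_word u [:: u i] (W i L).
  exists i, (i + (L - 1)); split; rewrite /occurs_at ?subword1 //; first lia.
  - by move: end_occ; rewrite !subword1 /= !inE orbb => /eqP.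
  - move=> k /andP[ik kj]; rewrite subword1 => -[uk]; have mid : 0 < k - i < L - 1 by lia.
    by have := no_occ (k - i) mid; rewrite subnKC ?(ltnW ik) // !subword1 uk mem_head.
  - by congr (W _ _) => /=; lia.
have /eqP/rev_subword_idP sym := pal_returns _ _ ret.
have first_letter : u (i + (L - 1 - 1)) = u i.+1.
  by rewrite sym; [congr (u _) |]; lia.
have second_letter : u (i + (L - 1 - 1)).+1 = u i.
  by rewrite -addnS sym; [congr (u _) |]; lia.
by rewrite !subwordS !subword0 first_letter second_letter.
Qed.

End MirroredBase.

(* Complete return words to palindromes are palindromes, in terms of positions: W m n
   and W g n are consecutive occurrences of the palindrome W m n. *)
Definition pal_returns_pal (A : finType) (u : nat -> A) := forall m g n, 0 < n -> m < g ->
  subword u m n = subword u g n -> palindrome (subword u m n) ->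
  (forall k, m < k < g -> subword u k n != subword u m n) ->
  palindrome (subword u m (g + n - m)).

Section PalindromicReturns.
Variables (A : finType) (u : nat -> A).
Notation W := (subword u).
Hypothesis mirrored : forall n, 0 < n -> mirrored_returns u n.
Variables m g n : nat.
Hypotheses (n_gt0 : 0 < n) (mg : m < g) (occ_g : W m n = W g n).
Hypothesis pal_m : palindrome (W m n).
Hypothesis no_occ : forall k, m < k < g -> W k n != W m n.

Lemma no_occ_between k : m < k < g -> W k n = W m n -> False.
Proof. by move=> /no_occ/eqP. Qed.

Lemma return_suffix_rev d : d < g - m -> W (g - d) (n + d) = rev (W m (n + d)).
Proof.
elim: d => [|d IHd] dgm; first by rewrite subn0 addn0 -occ_g; move/eqP: pal_m.
have := @mirrored (n + d) (ltn_addr d n_gt0) m (g + n - m).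
have -> : m + (g + n - m - (n + d)) = g - d by lia.
have -> : m + (g + n - m - (n + d) - 1) = g - d.+1 by lia.
rewrite addnS; apply; first lia.
  by rewrite IHd 1?ltnW // !inE eqxx orbT.
move=> k /andP[k0 kR]; rewrite !inE negb_or; apply/andP; split; apply/eqP => occ_k.
  apply: (@no_occ_between (m + k)); first lia.
  by rewrite -(take_subword u (m + k) (leq_addr d n)) occ_k take_subword ?leq_addr.
apply: (@no_occ_between (m + k + d)); first lia.
rewrite occ_g.
have -> : W (m + k + d) n = drop d (W (m + k) (n + d)).
  by rewrite drop_subword addnK.
rewrite occ_k -IHd ?(ltnW dgm) // drop_subword addnK; congr (W _ _); lia.
Qed.

Lemma return_pal : palindrome (W m (g + n - m)).
Proof.
set R := g + n - m.
have gm : g - m - 1 < g - m by lia.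
have := return_suffix_rev gm.
have -> : g - (g - m - 1) = m + 1 by lia.
have -> : n + (g - m - 1) = R - 1 by rewrite /R; lia.
move=> suffix_rev.
have sym t : t < R - 1 -> u (m + 1 + t) = u (m + (R - t.+2)).
  move=> tR; have := congr1 (nth (u 0) ^~ t) suffix_rev.
  by rewrite nth_subword // nth_rev_subword // => ->; congr (u _); lia.
apply/eqP/rev_subword_idP => -[|t] tR.
  have -> : m + (R - 1) = m + 1 + (R - 2) by rewrite /R; lia.
  rewrite addn0.
  by rewrite sym; [congr (u _) |]; rewrite /R; lia.
have -> : m + t.+1 = m + 1 + t by lia.
by rewrite sym //; lia.
Qed.

End PalindromicReturns.

Lemma mirrored_pal_returns (A : finType) (u : nat -> A) :
  (forall n, 0 < n -> mirrored_returns u n) -> pal_returns_pal u.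
Proof. by move=> mirrored m g n; apply: return_pal. Qed.

Section LongestPalindromicSuffix.
Variable T : finType.
Implicit Type v : seq T.

Definition lps_start v := find (fun k => palindrome (drop k v)) (iota 0 (size v).+1).

Definition lps v := drop (lps_start v) v.

Lemma has_pal_suffix v : has (fun k => palindrome (drop k v)) (iota 0 (size v).+1).
Proof. by apply/hasP; exists (size v); rewrite ?mem_iota ?add0n ?ltnSn // drop_size. Qed.

Lemma lps_start_le v : lps_start v <= size v.
Proof. by have := has_pal_suffix v; rewrite has_find size_iota. Qed.

Lemma palindrome_lps v : palindrome (lps v).
Proof.
have := nth_find 0 (has_pal_suffix v).
by rewrite nth_iota // ltnS lps_start_le.
Qed.

Lemma lps_start_min v k : k <= size v -> palindrome (drop k v) -> lps_start v <= k.
Proof.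
move=> kv pal_k; rewrite leqNgt; apply/negP => /(before_find 0).
by rewrite nth_iota ?add0n ?pal_k // ltnS.
Qed.

End LongestPalindromicSuffix.

Section Richness.
Variables (A : finType) (u : nat -> A).
Notation W := (subword u).
Hypothesis pal_returns : pal_returns_pal u.
Variable i0 : nat.

Let start j := lps_start (W i0 j).

Lemma lps_prefix j : lps (W i0 j) = W (i0 + start j) (j - start j).
Proof. exact: drop_subword. Qed.

Lemma start_le j : start j <= j.
Proof. by have := lps_start_le (W i0 j); rewrite size_subword. Qed.

Lemma start_lt j : 0 < j -> start j < j.
Proof.
move=> j0; suff : start j <= j.-1 by lia.
apply: lps_start_min; first by rewrite size_subword leq_pred.
by rewrite drop_subword (_ : j - j.-1 = 1) ?subword1 /palindrome //; lia.
Qed.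

(* lps (W i0 b) is unioccurrent in W i0 b: otherwise the complete return word to it
   ending at its last occurrence would be a longer palindromic suffix. *)
Lemma lps_prefix_neq a b : a < b -> lps (W i0 a) != lps (W i0 b).
Proof.
move=> ab; apply/eqP => lps_ab.
have start_b := start_lt (leq_ltn_trans (leq0n a) ab).
have start_a := start_le a.
have := congr1 size lps_ab; rewrite !lps_prefix !size_subword => size_ab.
set n := b - start b in size_ab.
have occ_b : W (i0 + start a) n = W (i0 + start b) n by move: lps_ab; rewrite !lps_prefix size_ab.
have lt_ab : i0 + start a < i0 + start b by lia.
have [m [am mb /eqP occ_m last_m]] :=
  last_index_before (P := fun x => W x n == W (i0 + start b) n) lt_ab (introT eqP occ_b).
have pal_m : palindrome (W m n) by rewrite occ_m -(lps_prefix b) palindrome_lps.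
have := pal_returns (m := m) (g := i0 + start b) (n := n) _ mb occ_m pal_m.
have -> : W m (i0 + start b + n - m) = drop (m - i0) (W i0 b).
  by rewrite drop_subword; congr (W _ _); lia.
move=> pal_drop; have n_gt0 : 0 < n by lia.
have no_occ k : m < k < i0 + start b -> W k n != W m n by rewrite occ_m; apply: last_m.
have := lps_start_min _ (pal_drop n_gt0 no_occ); rewrite size_subword -/(start b).
by move=> /(_ _); lia.
Qed.

Lemma prefix_num_pal N : N.+1 <= num_pal (W i0 N).
Proof.
set prefix_lps := [seq lps (W i0 j) | j <- iota 0 N.+1].
have sub : {subset prefix_lps <= undup (filter (@palindrome A) (factors_fin (W i0 N)))}.
  move=> x /mapP[j]; rewrite mem_iota add0n ltnS => jN ->.
  rewrite mem_undup mem_filter palindrome_lps /=.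
  apply/allpairsPdep; exists (start j), (j - start j); rewrite !mem_iota size_subword.
  have := start_le j; split; try lia.
  by rewrite lps_prefix drop_subword take_subword //; lia.
have uniq_lps : uniq prefix_lps.
  rewrite map_inj_in_uniq ?iota_uniq // => a b _ _ lps_ab.
  by case: (ltngtP a b) => // ab; [move: (lps_prefix_neq ab) | move: (lps_prefix_neq ab)];
    rewrite lps_ab eqxx.
by have := uniq_leq_size uniq_lps sub; rewrite size_map size_iota.
Qed.

End Richness.

Lemma defect_eq0 (A : finType) (u : nat -> A) w :
  pal_returns_pal u -> factor u w -> defect w = 0.
Proof.
move=> pal_returns [i0 occ]; rewrite -occ /defect size_subword; apply/eqP.
by rewrite subn_eq0; apply: prefix_num_pal.
Qed.

Lemma defect_pos_not_mirrored (A : finType) (u : nat -> A) :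
  defect_pos u -> ~ forall n, 0 < n -> mirrored_returns u n.
Proof.
move=> [w [fw defect_w]] mirrored.
by rewrite (defect_eq0 (mirrored_pal_returns mirrored) fw) in defect_w.
Qed.

Theorem theorem26 (A : finType) (u : nat -> A) :
  closed_under_reversal u -> defect_pos u ->
  (exists q, factor u q /\ cycle_prop u q) /\
  ((cycle_prop u [::] /\ (forall q, factor u q -> cycle_prop u q -> q = [::])) ->
   exists (a : A) (r : seq A), complete_return_word u [:: a] r /\ ~~ palindrome r).
Proof.
move=> closed_u /defect_pos_not_mirrored not_mirrored; split.
  apply: NNPP => no_cycle; apply: not_mirrored => n _.
  have acyclic k : 0 <= k -> acyclic_factors u k.
    by move=> _ q _ fq cq; apply: no_cycle; exists q.
  exact (mirrored_returns_from closed_u (@mirrored_returns0 A u) acyclic (leq0n n)).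
move=> [_ only_empty]; apply: NNPP => no_npal_return; apply: not_mirrored => n n_gt0.
have pal_letters a r : complete_return_word u [:: a] r -> palindrome r.
  by move=> ret; apply/negPn/negP => npal; apply: no_npal_return; exists a, r.
have acyclic k : 0 < k -> acyclic_factors u k.
  by move=> k_gt0 q qk fq /(only_empty q fq) q0; rewrite -qk q0 in k_gt0.
exact (mirrored_returns_from closed_u (mirrored_returns1 pal_letters) acyclic n_gt0).
Qed.
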